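(* Let $\mathcal{A}$ and $\mathcal{B}$ be unital complex algebras with faithful and regular Sylvester rank functions $\mathrm{rk}_{\mathcal{A}}$ and $\mathrm{rk}_{\mathcal{B}}$. Let $X=(X_1,\dots,X_d)\in\mathcal{A}^d$ and $Y=(Y_1,\dots,Y_d)\in\mathcal{B}^d$ be such that for any matrix $A$ over $\mathbb{C}\langle x_1,\dots,x_d\rangle$, $\mathrm{rk}_{\mathcal{A}}(A(X))=\mathrm{rk}_{\mathcal{B}}(A(Y))$. Then the rational closures $\mathcal{A}_X$ and $\mathcal{B}_Y$ are isomorphic. Moreover, for any rational expression $R$ in $x_1,\dots,x_d$, $R(Y)$ is well-defined if and only if $R(X)$ is well-defined, and then $\mathrm{rk}_{\mathcal{B}}(R(Y))=\mathrm{rk}_{\mathcal{A}}(R(X))$.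
   Context: A Sylvester rank function on a unital complex algebra $\mathcal{A}$ is a function $\mathrm{rk}$ from rectangular matrices over $\mathcal{A}$ to $[0,\infty)$ with $\mathrm{rk}(0)=0$, $\mathrm{rk}(1)=1$, $\mathrm{rk}(AB)\le\min(\mathrm{rk}A,\mathrm{rk}B)$, $\mathrm{rk}(A\oplus B)=\mathrm{rk}A+\mathrm{rk}B$, $\mathrm{rk}\begin{pmatrix}A&C\\0&B\end{pmatrix}\ge\mathrm{rk}A+\mathrm{rk}B$. Faithful: $\mathrm{rk}(A)>0$ for $A\neq0$. Regular: $A\in M_n(\mathcal{A})$ with $\mathrm{rk}(A)=n$ is invertible. For a tuple $X$ in $\mathcal{A}$, $\Sigma_X$ is the set of square matrices $A$ over $\mathbb{C}\langle x_1,\dots,x_d\rangle$ with $A(X)$ invertible; the rational closure $\mathcal{A}_X$ is the set of all entries of $A(X)^{-1}$, $A\in\Sigma_X$ (a subalgebra of $\mathcal{A}$). Rational expressions are combinations of scalars and the $x_i$ via $+,\cdot,{}^{-1}$, parentheses, evaluated recursively with inverses defined only where the argument is invertible in the algebra; ''well-defined'' means the tuple lies in the domain. *)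

From HB Require Import structures.
From mathcomp Require Import all_boot all_order all_algebra.
From mathcomp Require Import reals Rstruct complex.
Set Implicit Arguments. Unset Strict Implicit. Unset Printing Implicit Defensive.
Import Order.TTheory GRing.Theory Num.Theory.
Local Open Scope ring_scope.

Notation Rr := Rdefinitions.R.
Definition Cx : fieldType := (Rr[i])%C.

Definition mx_invertible (A : nzRingType) (n : nat) (M : 'M[A]_n) : Prop :=
  exists N : 'M[A]_n, M *m N = 1%:M /\ N *m M = 1%:M.

Definition sylvester_rank (A : algType Cx)
    (rk : forall m n : nat, 'M[A]_(m, n) -> Rr) : Prop :=
  [/\ (forall m n (M : 'M[A]_(m, n)), 0 <= rk m n M) /\
        (forall m n, rk m n 0 = 0),
      rk 1%N 1%N 1%:M = 1,
      (forall m n p (M : 'M[A]_(m, n)) (N : 'M[A]_(n, p)),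
          rk m p (M *m N) <= Num.min (rk m n M) (rk n p N)),
      (forall m1 n1 m2 n2 (M : 'M[A]_(m1, n1)) (N : 'M[A]_(m2, n2)),
          rk (m1 + m2)%N (n1 + n2)%N (block_mx M 0 0 N) = rk m1 n1 M + rk m2 n2 N)
    & (forall m1 n1 m2 n2 (M : 'M[A]_(m1, n1)) (P : 'M[A]_(m1, n2))
          (N : 'M[A]_(m2, n2)),
          rk m1 n1 M + rk m2 n2 N <= rk (m1 + m2)%N (n1 + n2)%N (block_mx M P 0 N))].

Definition rank_faithful (A : algType Cx)
    (rk : forall m n : nat, 'M[A]_(m, n) -> Rr) : Prop :=
  forall m n (M : 'M[A]_(m, n)), M != 0 -> 0 < rk m n M.

Definition rank_regular (A : algType Cx)
    (rk : forall m n : nat, 'M[A]_(m, n) -> Rr) : Prop :=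
  forall n (M : 'M[A]_n), rk n n M = n%:R -> mx_invertible M.

(** Noncommutative polynomials in x_1..x_d over C, as formal expressions
    (every element of C<x_1,..,x_d> is represented by such an expression,
    and evaluation factors through the free algebra). *)
Inductive ncpoly (d : nat) : Type :=
  | NCConst of Cx
  | NCVar of 'I_d
  | NCAdd of ncpoly d & ncpoly d
  | NCMul of ncpoly d & ncpoly d.

Fixpoint nceval (A : algType Cx) d (X : 'I_d -> A) (p : ncpoly d) : A :=
  match p with
  | NCConst c => c%:A
  | NCVar i => X i
  | NCAdd p q => nceval X p + nceval X q
  | NCMul p q => nceval X p * nceval X q
  end.

Definition mxeval (A : algType Cx) d (X : 'I_d -> A) m n
    (P : 'M[ncpoly d]_(m, n)) : 'M[A]_(m, n) :=
  \matrix_(i, j) nceval X (P i j).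

Definition rational_closure (A : algType Cx) d (X : 'I_d -> A) (a : A) : Prop :=
  exists n (P : 'M[ncpoly d]_n) (N : 'M[A]_n) (i j : 'I_n),
    mxeval X P *m N = 1%:M /\ N *m mxeval X P = 1%:M /\ a = N i j.

Definition subalg_isomorphic (A B : algType Cx) (SA : A -> Prop) (SB : B -> Prop)
  : Prop :=
  exists f : A -> B,
    [/\ (forall a, SA a -> SB (f a)) /\
          (forall a1 a2, SA a1 -> SA a2 -> f a1 = f a2 -> a1 = a2),
        (forall b, SB b -> exists2 a, SA a & f a = b),
        (forall a1 a2, SA a1 -> SA a2 -> f (a1 + a2) = f a1 + f a2) /\
          (forall a1 a2, SA a1 -> SA a2 -> f (a1 * a2) = f a1 * f a2),
        (forall (c : Cx) a, SA a -> f (c *: a) = c *: f a)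
      & f 1 = 1].

Inductive ratexpr (d : nat) : Type :=
  | RConst of Cx
  | RVar of 'I_d
  | RAdd of ratexpr d & ratexpr d
  | RMul of ratexpr d & ratexpr d
  | RInv of ratexpr d.

Inductive rat_eval (A : algType Cx) d (X : 'I_d -> A) : ratexpr d -> A -> Prop :=
  | rev_const c : rat_eval X (RConst d c) (c%:A)
  | rev_var i : rat_eval X (RVar i) (X i)
  | rev_add r s a b : rat_eval X r a -> rat_eval X s b -> rat_eval X (RAdd r s) (a + b)
  | rev_mul r s a b : rat_eval X r a -> rat_eval X s b -> rat_eval X (RMul r s) (a * b)
  | rev_inv r a b : rat_eval X r a -> a * b = 1 -> b * a = 1 -> rat_eval X (RInv r) b.

Definition well_defined (A : algType Cx) d (X : 'I_d -> A) (r : ratexpr d) : Prop :=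
  exists a, rat_eval X r a.

From mathcomp Require Import all_boot all_order all_algebra.
From mathcomp Require Import reals Rstruct complex.
From Stdlib Require Import ClassicalEpsilon.
Set Implicit Arguments. Unset Strict Implicit. Unset Printing Implicit Defensive.
Import Order.TTheory GRing.Theory Num.Theory.
Local Open Scope ring_scope.

(* Every entry of A(X)^-1, and every value of a rational expression at X, can
   be written a = u P(X)^-1 v with P, u, v matrices over C<x> of sizes n x n,
   1 x n and n x 1, and such realizations are closed under +, *, scaling and
   inversion.  Eliminating u and v against the pivot P gives
   rk [P v; u 0] = n + rk (u P^-1 v), so the rank hypothesis makes P(Y)
   invertible (by regularity) and identifies the ranks of u P(X)^-1 v and
   u P(Y)^-1 v.  Applied to the difference of two realizations of one element,
   faithfulness shows that a |-> u P(Y)^-1 v is well defined; it is the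
   isomorphism A_X -> B_Y. *)

Section NcPolyMatrices.
Variable d : nat.

Definition ncmx_of_cmx m n (M : 'M[Cx]_(m, n)) : 'M[ncpoly d]_(m, n) :=
  map_mx (NCConst d) M.

Definition ncmx_scale (c : Cx) m n (M : 'M[ncpoly d]_(m, n)) :=
  map_mx (NCMul (NCConst d c)) M.

Definition ncmx_outer m n (v : 'M[ncpoly d]_(m, 1)) (u : 'M[ncpoly d]_(1, n)) :
  'M[ncpoly d]_(m, n) := \matrix_(i, j) NCMul (v i 0) (u 0 j).

End NcPolyMatrices.

Section MatrixEvaluation.
Variables (Z : algType Cx) (d : nat) (W : 'I_d -> Z).

Lemma mxevalE m n (M : 'M[ncpoly d]_(m, n)) : mxeval W M = map_mx (nceval W) M.
Proof. by apply/matrixP=> i j; rewrite !mxE. Qed.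

Lemma mxeval_block m1 m2 n1 n2 (Ul : 'M_(m1, n1)) (Ur : 'M_(m1, n2))
    (Dl : 'M_(m2, n1)) (Dr : 'M_(m2, n2)) :
  mxeval W (block_mx Ul Ur Dl Dr) =
  block_mx (mxeval W Ul) (mxeval W Ur) (mxeval W Dl) (mxeval W Dr).
Proof. by rewrite !mxevalE map_block_mx. Qed.

Lemma mxeval_row m n1 n2 (L : 'M_(m, n1)) (R : 'M_(m, n2)) :
  mxeval W (row_mx L R) = row_mx (mxeval W L) (mxeval W R).
Proof. by rewrite !mxevalE map_row_mx. Qed.

Lemma mxeval_col m1 m2 n (U : 'M_(m1, n)) (D : 'M_(m2, n)) :
  mxeval W (col_mx U D) = col_mx (mxeval W U) (mxeval W D).
Proof. by rewrite !mxevalE map_col_mx. Qed.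

Lemma mxeval_const_mx p : mxeval W (const_mx p : 'M_1) = (nceval W p)%:M.
Proof. by apply/matrixP=> i j; rewrite !mxE !ord1 eqxx mulr1n. Qed.

Lemma mxeval_of_cmx m n (M : 'M_(m, n)) :
  mxeval W (ncmx_of_cmx d M) = map_mx (in_alg Z) M.
Proof. by apply/matrixP=> i j; rewrite !mxE. Qed.

Lemma mxeval_scale c m n (M : 'M_(m, n)) :
  mxeval W (ncmx_scale c M) = c%:A *: mxeval W M.
Proof. by apply/matrixP=> i j; rewrite !mxE /= mulr_algl. Qed.

Lemma mxeval_outer m n (v : 'M_(m, 1)) (u : 'M_(1, n)) :
  mxeval W (ncmx_outer v u) = mxeval W v *m mxeval W u.
Proof. by apply/matrixP=> i j; rewrite !mxE big_ord1 !mxE. Qed.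

End MatrixEvaluation.

Record linrep d := LinRep {
  linrep_dim : nat;
  linrep_mx : 'M[ncpoly d]_linrep_dim;
  linrep_row : 'M[ncpoly d]_(1, linrep_dim);
  linrep_col : 'M[ncpoly d]_(linrep_dim, 1) }.

Definition realizes (Z : algType Cx) d (W : 'I_d -> Z) (R : linrep d) (a : Z) :=
  exists N, [/\ mxeval W (linrep_mx R) *m N = 1%:M,
                N *m mxeval W (linrep_mx R) = 1%:M
              & mxeval W (linrep_row R) *m N *m mxeval W (linrep_col R) = a%:M].

Section LinearRepresentations.
Variable d : nat.
Local Notation zero := (ncmx_of_cmx d 0).
Local Notation one := (ncmx_of_cmx d 1%:M).

Definition linrep_poly (p : ncpoly d) := LinRep one (const_mx p) one.

Definition linrep_add (R1 R2 : linrep d) :=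
  LinRep (block_mx (linrep_mx R1) zero zero (linrep_mx R2))
         (row_mx (linrep_row R1) (linrep_row R2))
         (col_mx (linrep_col R1) (linrep_col R2)).

Definition linrep_mul (R1 R2 : linrep d) :=
  LinRep (block_mx (linrep_mx R1)
                   (ncmx_scale (-1) (ncmx_outer (linrep_col R1) (linrep_row R2)))
                   zero (linrep_mx R2))
         (row_mx (linrep_row R1) zero) (col_mx zero (linrep_col R2)).

Definition linrep_scale c (R : linrep d) :=
  LinRep (linrep_mx R) (ncmx_scale c (linrep_row R)) (linrep_col R).

(* By the Schur complement formula, the bottom-right entry of [P -v; u 0]^-1
   is (u P^-1 v)^-1. *)
Definition linrep_inv (R : linrep d) :=
  LinRep (block_mx (linrep_mx R) (ncmx_scale (-1) (linrep_col R)) (linrep_row R) zero)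
         (row_mx zero one) (col_mx zero one).

Definition linrep_entry n (P : 'M[ncpoly d]_n) i j :=
  LinRep P (ncmx_of_cmx d (delta_mx 0 i)) (ncmx_of_cmx d (delta_mx j 0)).

End LinearRepresentations.

Section Realizations.
Variables (Z : algType Cx) (d : nat) (W : 'I_d -> Z).

Let mxeval_zero m n : mxeval W (ncmx_of_cmx d 0) = 0 :> 'M_(m, n).
Proof. by rewrite mxeval_of_cmx map_mx0. Qed.

Let mxeval_one n : mxeval W (ncmx_of_cmx d 1%:M) = 1%:M :> 'M_n.
Proof. by rewrite mxeval_of_cmx map_mx1. Qed.

Let mxeval_scaleN1 m n (M : 'M_(m, n)) : mxeval W (ncmx_scale (-1) M) = - mxeval W M.
Proof. by rewrite mxeval_scale !scaleN1r. Qed.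

Lemma realizes_poly p : realizes W (linrep_poly p) (nceval W p).
Proof.
by exists 1%:M; rewrite /= mxeval_const_mx mxeval_one !mulmx1.
Qed.

Lemma realizes_add R1 R2 a1 a2 : realizes W R1 a1 -> realizes W R2 a2 ->
  realizes W (linrep_add R1 R2) (a1 + a2).
Proof.
case=> N1 [PN1 NP1 e1] [N2 [PN2 NP2 e2]].
exists (block_mx N1 0 0 N2).
rewrite /= mxeval_block mxeval_row mxeval_col !mxeval_zero.
rewrite !mulmx_block mul_row_block mul_row_col !mulmx0 !mul0mx !addr0 !add0r.
by rewrite PN1 PN2 NP1 NP2 -!scalar_mx_block e1 e2 raddfD.
Qed.

Lemma realizes_mul R1 R2 a1 a2 : realizes W R1 a1 -> realizes W R2 a2 ->
  realizes W (linrep_mul R1 R2) (a1 * a2).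
Proof.
case=> N1 [PN1 NP1 e1] [N2 [PN2 NP2 e2]].
set v1 := mxeval W (linrep_col R1); set u2 := mxeval W (linrep_row R2).
exists (block_mx N1 (N1 *m v1 *m u2 *m N2) 0 N2).
rewrite /= mxeval_block mxeval_row mxeval_col !mxeval_zero mxeval_scaleN1 mxeval_outer.
rewrite !mulmx_block mul_row_block mul_row_col !mulmx0 !mul0mx !addr0 !add0r.
split.
- by rewrite scalar_mx_block PN1 PN2 !mulmxA PN1 mul1mx mulNmx addrN.
- by rewrite scalar_mx_block NP1 NP2 mulmxN -!mulmxA NP2 mulmx1 addNr.
- by rewrite scalar_mxM -e1 -e2 !mulmxA.
Qed.

Lemma realizes_scale c R a : realizes W R a -> realizes W (linrep_scale c R) (c *: a).
Proof.
case=> N [PN NP e]; exists N; split=> //=.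
by rewrite mxeval_scale -!scalemxAl e scale_scalar_mx mulr_algl.
Qed.

Lemma realizes_inv R a b : realizes W R a -> a * b = 1 -> b * a = 1 ->
  realizes W (linrep_inv R) b.
Proof.
case=> N [PN NP e] ab ba.
set P := mxeval W (linrep_mx R); set u := mxeval W (linrep_row R).
set v := mxeval W (linrep_col R).
have ab' : u *m N *m v *m b%:M = 1%:M by rewrite e -scalar_mxM ab.
have ba' : b%:M *m (u *m N *m v) = 1%:M by rewrite e -scalar_mxM ba.
exists (block_mx (N - N *m v *m b%:M *m u *m N) (N *m v *m b%:M)
                 (- (b%:M *m u *m N)) b%:M).
rewrite /= mxeval_block mxeval_row mxeval_col !mxeval_zero mxeval_scaleN1 !mxeval_one -/P -/u -/v.
rewrite !mulmx_block mul_row_block mul_row_col !mulmx0 !mul0mx !addr0 !add0r.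
rewrite !mulmxBr !mulmxBl mul1mx mulmx1.
split=> //; rewrite scalar_mx_block; congr block_mx.
- by rewrite mulNmx mulmxN opprK !mulmxA PN mul1mx subrK.
- by rewrite !mulmxA PN mul1mx mulNmx addrN.
- by rewrite !mulmxA ab' mul1mx subrr.
- by rewrite !mulmxA ab'.
- by rewrite -!mulmxA NP !mulmx1 subrK.
- by rewrite !mulmxN opprK -!mulmxA (mulmxA u N v) ba' mulmx1 addNr.
- by rewrite mulNmx -!mulmxA NP mulmx1 addNr.
- by rewrite mulmxN mulNmx opprK -!mulmxA (mulmxA u N v) ba'.
Qed.

Lemma realizes_entry n (P : 'M[ncpoly d]_n) N i j :
  mxeval W P *m N = 1%:M -> N *m mxeval W P = 1%:M ->
  realizes W (linrep_entry P i j) (N i j).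
Proof.
move=> PN NP; exists N; split=> //=.
rewrite !mxeval_of_cmx !map_delta_mx -rowE -colE.
by apply/matrixP=> k l; rewrite !ord1 !mxE eqxx mulr1n.
Qed.

End Realizations.

Section SylvesterRank.
Variables (Z : algType Cx) (rk : forall m n : nat, 'M[Z]_(m, n) -> Rr).
Hypothesis rk_syl : sylvester_rank rk.

Lemma rk_mulmx_maxl m n p (M : 'M[Z]_(m, n)) (N : 'M[Z]_(n, p)) : rk (M *m N) <= rk M.
Proof. by case: rk_syl => _ _ rkM _ _; have := rkM _ _ _ M N; rewrite le_min => /andP[]. Qed.

Lemma rk_mulmx_maxr m n p (M : 'M[Z]_(m, n)) (N : 'M[Z]_(n, p)) : rk (M *m N) <= rk N.
Proof. by case: rk_syl => _ _ rkM _ _; have := rkM _ _ _ M N; rewrite le_min => /andP[]. Qed.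

Lemma rk_mulmx_unitl m n (L L' : 'M[Z]_m) (M : 'M[Z]_(m, n)) :
  L' *m L = 1%:M -> rk (L *m M) = rk M.
Proof.
move=> L'L; apply/eqP; rewrite eq_le rk_mulmx_maxr /=.
by rewrite -{1}(mul1mx M) -L'L -mulmxA rk_mulmx_maxr.
Qed.

Lemma rk_mulmx_unitr m n (R R' : 'M[Z]_n) (M : 'M[Z]_(m, n)) :
  R *m R' = 1%:M -> rk (M *m R) = rk M.
Proof.
move=> RR'; apply/eqP; rewrite eq_le rk_mulmx_maxl /=.
by rewrite -{1}(mulmx1 M) -RR' mulmxA rk_mulmx_maxl.
Qed.

Lemma rk_mx1 n : rk (1%:M : 'M[Z]_n) = n%:R.
Proof.
case: rk_syl => [[_ rk0] rk1 _ rk_diag _].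
elim: n => [|n IHn]; first by rewrite (_ : 1%:M = 0) ?rk0 //; apply/matrixP => [[]].
have := rk_diag 1 1 n n 1%:M 1%:M; rewrite -scalar_mx_block rk1 IHn => ->.
by rewrite -natr1 addrC.
Qed.

Lemma rk_unitmx n (P N : 'M[Z]_n) : P *m N = 1%:M -> rk P = n%:R.
Proof.
move=> PN; apply/eqP; rewrite eq_le -rk_mx1 -{1}(mul1mx P) rk_mulmx_maxl /=.
by rewrite -PN rk_mulmx_maxl.
Qed.

Lemma rk_oppmx m n (M : 'M[Z]_(m, n)) : rk (- M) = rk M.
Proof.
rewrite -scaleN1r -mul_scalar_mx (@rk_mulmx_unitl _ _ _ (- 1)%:M) //.
by rewrite -scalar_mxM mulrNN mulr1.
Qed.

(* Row and column operations with the pivot P turn [P v; u 0] into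
   diag(P, - u N v). *)
Lemma rk_schur n (P N : 'M[Z]_n) (u : 'M[Z]_(1, n)) (v : 'M[Z]_(n, 1)) :
  P *m N = 1%:M -> N *m P = 1%:M ->
  rk (block_mx P v u 0) = n%:R + rk (u *m N *m v).
Proof.
move=> PN NP.
pose L := block_mx 1%:M 0 (- (u *m N)) 1%:M : 'M[Z]_(n + 1).
pose L' := block_mx 1%:M 0 (u *m N) 1%:M : 'M[Z]_(n + 1).
pose R := block_mx 1%:M (- (N *m v)) 0 1%:M : 'M[Z]_(n + 1).
pose R' := block_mx 1%:M (N *m v) 0 1%:M : 'M[Z]_(n + 1).
have L'L : L' *m L = 1%:M.
  by rewrite mulmx_block !mul1mx ?mul0mx !mulmx0 !mulmx1 ?addr0 ?add0r addrN -scalar_mx_block.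
have RR' : R *m R' = 1%:M.
  by rewrite mulmx_block !mul1mx ?mul0mx ?mulmx0 !mulmx1 ?addr0 ?add0r addrN -scalar_mx_block.
rewrite -(rk_mulmx_unitl _ L'L) -(rk_mulmx_unitr _ RR') /L /R !mulmx_block.
rewrite ?mul1mx ?mul0mx ?mulmx0 ?mulmx1 ?addr0 ?add0r.
rewrite (mulmxN P) (mulmxA P N v) PN mul1mx addNr.
rewrite (mulNmx (u *m N) P) -(mulmxA u N P) NP mulmx1 addNr mul0mx add0r mulNmx.
by case: rk_syl => _ _ _ rk_diag _; rewrite rk_diag rk_oppmx (rk_unitmx PN).
Qed.

Lemma rk_scalar_unit (a b : Z) : a * b = 1 -> rk (a%:M : 'M_1) = 1.
Proof.
case: rk_syl => _ rk1 _ _ _ ab; apply/eqP; rewrite eq_le.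
by rewrite -rk1 -{1}(mulmx1 a%:M) rk_mulmx_maxr -ab scalar_mxM rk_mulmx_maxl.
Qed.

Lemma rk_scalar_eq0 (rk_faith : rank_faithful rk) (a : Z) :
  rk (a%:M : 'M_1) = 0 -> a = 0.
Proof.
move=> rka0; apply/eqP; apply: contraT => a_neq0.
have : (a%:M : 'M[Z]_1) != 0.
  by apply: contra a_neq0 => /eqP/matrixP/(_ 0 0); rewrite !mxE eqxx mulr1n => ->.
by move/rk_faith; rewrite rka0 ltxx.
Qed.

Lemma rk_scalar_invertible (rk_reg : rank_regular rk) (a : Z) :
  rk (a%:M : 'M_1) = 1 -> exists b, a * b = 1 /\ b * a = 1.
Proof.
move=> /rk_reg [N [aN Na]]; exists (N 0 0); split.
  by move/matrixP: aN => /(_ 0 0); rewrite mul_scalar_mx !mxE eqxx mulr1n.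
by move/matrixP: Na => /(_ 0 0); rewrite !mxE big_ord1 !mxE eqxx !mulr1n.
Qed.

End SylvesterRank.

Lemma rat_eval_fun (Z : algType Cx) d (W : 'I_d -> Z) r a b :
  rat_eval W r a -> rat_eval W r b -> a = b.
Proof.
move=> Wra; elim: Wra b => [c | i | r1 r2 a1 a2 _ IH1 _ IH2 | r1 r2 a1 a2 _ IH1 _ IH2
                          | r1 a1 a2 _ IH a1a2 _] b Wrb.
- by inversion Wrb.
- by inversion Wrb.
- by inversion Wrb as [| | ? ? b1 b2 Wb1 Wb2 | |]; rewrite (IH1 _ Wb1) (IH2 _ Wb2).
- by inversion Wrb as [| | | ? ? b1 b2 Wb1 Wb2 |]; rewrite (IH1 _ Wb1) (IH2 _ Wb2).
- inversion Wrb as [| | | | ? b1 ? Wb1 _ b_b1]; rewrite -(IH _ Wb1) in b_b1.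
  by rewrite -[b]mulr1 -a1a2 mulrA b_b1 mul1r.
Qed.

Section RankTransfer.
Variables (A B : algType Cx).
Variables (rkA : forall m n : nat, 'M[A]_(m, n) -> Rr)
          (rkB : forall m n : nat, 'M[B]_(m, n) -> Rr).
Hypotheses (rkA_syl : sylvester_rank rkA) (rkB_syl : sylvester_rank rkB).
Hypotheses (rkB_faith : rank_faithful rkB) (rkB_reg : rank_regular rkB).
Variables (d : nat) (X : 'I_d -> A) (Y : 'I_d -> B).
Hypothesis rk_XY : forall m n (P : 'M[ncpoly d]_(m, n)),
  rkA (mxeval X P) = rkB (mxeval Y P).

Lemma mx_invertible_transfer n (P : 'M[ncpoly d]_n) N :
  mxeval X P *m N = 1%:M -> mx_invertible (mxeval Y P).
Proof. by move=> PN; apply: rkB_reg; rewrite -rk_XY (rk_unitmx rkA_syl PN). Qed.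

Lemma realizes_rk R a b : realizes X R a -> realizes Y R b ->
  rkA (a%:M : 'M_1) = rkB (b%:M : 'M_1).
Proof.
case=> N [PN NP <-] [N' [PN' NP' <-]].
have := rk_XY (block_mx (linrep_mx R) (linrep_col R) (linrep_row R) (ncmx_of_cmx d 0)).
rewrite !mxeval_block !mxeval_of_cmx !map_mx0.
by rewrite (rk_schur rkA_syl _ _ PN NP) (rk_schur rkB_syl _ _ PN' NP') => /addrI.
Qed.

(* The difference of the two realizations realizes a - a = 0 in A, hence an
   element of rank 0 in B. *)
Lemma realizes_transfer_unique R1 R2 a b1 b2 :
  realizes X R1 a -> realizes Y R1 b1 -> realizes X R2 a -> realizes Y R2 b2 ->
  b1 = b2.
Proof.
move=> Xa1 Yb1 Xa2 Yb2; apply/eqP; rewrite -subr_eq0; apply/eqP.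
apply: (rk_scalar_eq0 rkB_faith).
have := realizes_rk (realizes_add Xa1 (realizes_scale (-1) Xa2))
                    (realizes_add Yb1 (realizes_scale (-1) Yb2)).
rewrite !scaleN1r subrr => <-.
by case: rkA_syl => [[_ rk0] _ _ _ _]; rewrite raddf0 rk0.
Qed.

Lemma rat_eval_realizes r a : rat_eval X r a ->
  exists R, realizes X R a /\ exists2 b, rat_eval Y r b & realizes Y R b.
Proof.
elim=> [c | i | r1 r2 a1 a2 _ [R1 [Xa1 [b1 Yr1 Yb1]]] _ [R2 [Xa2 [b2 Yr2 Yb2]]]
        | r1 r2 a1 a2 _ [R1 [Xa1 [b1 Yr1 Yb1]]] _ [R2 [Xa2 [b2 Yr2 Yb2]]]
        | r1 a1 a2 _ [R1 [Xa1 [b1 Yr1 Yb1]]] a1a2 a2a1].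
- exists (linrep_poly (NCConst d c)); split; first exact: realizes_poly.
  by exists c%:A; [exact: rev_const | exact: (realizes_poly Y (NCConst d c))].
- exists (linrep_poly (NCVar i)); split; first exact: realizes_poly.
  by exists (Y i); [exact: rev_var | exact: (realizes_poly Y (NCVar i))].
- exists (linrep_add R1 R2); split; first exact: realizes_add.
  by exists (b1 + b2); [exact: rev_add | exact: realizes_add].
- exists (linrep_mul R1 R2); split; first exact: realizes_mul.
  by exists (b1 * b2); [exact: rev_mul | exact: realizes_mul].
- have [b2 [b1b2 b2b1]] : exists b2, b1 * b2 = 1 /\ b2 * b1 = 1.
    apply: (rk_scalar_invertible rkB_reg).
    by rewrite -(realizes_rk Xa1 Yb1) (rk_scalar_unit rkA_syl a1a2).
  exists (linrep_inv R1); split; first exact: realizes_inv Xa1 a1a2 a2a1.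
  by exists b2; [exact: rev_inv Yr1 b1b2 b2b1 | exact: realizes_inv Yb1 b1b2 b2b1].
Qed.

Lemma rational_closure_realizes a : rational_closure X a ->
  exists R, realizes X R a /\ exists2 b, rational_closure Y b & realizes Y R b.
Proof.
case=> n [P [N [i [j [PN [NP ->]]]]]].
have [N' [PN' NP']] := mx_invertible_transfer PN.
exists (linrep_entry P i j); split; first exact: realizes_entry.
by exists (N' i j); [exists n, P, N', i, j | exact: realizes_entry].
Qed.

End RankTransfer.

Section RationalClosureIsomorphism.
Variables (A B : algType Cx).
Variables (rkA : forall m n : nat, 'M[A]_(m, n) -> Rr)
          (rkB : forall m n : nat, 'M[B]_(m, n) -> Rr).
Hypotheses (rkA_syl : sylvester_rank rkA) (rkA_faith : rank_faithful rkA)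
           (rkA_reg : rank_regular rkA).
Hypotheses (rkB_syl : sylvester_rank rkB) (rkB_faith : rank_faithful rkB)
           (rkB_reg : rank_regular rkB).
Variables (d : nat) (X : 'I_d -> A) (Y : 'I_d -> B).
Hypothesis rk_XY : forall m n (P : 'M[ncpoly d]_(m, n)),
  rkA (mxeval X P) = rkB (mxeval Y P).

Let rk_YX m n (P : 'M[ncpoly d]_(m, n)) : rkB (mxeval Y P) = rkA (mxeval X P).
Proof. by rewrite rk_XY. Qed.

Definition rational_transfer (a : A) : B :=
  epsilon (inhabits 0) (fun b => exists R, realizes X R a /\ realizes Y R b).

Lemma rational_transferE R a b :
  realizes X R a -> realizes Y R b -> rational_transfer a = b.
Proof.
move=> Xa Yb.
have [|R' [Xa' Yb']] := epsilon_spec (inhabits 0)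
  (fun b => exists R, realizes X R a /\ realizes Y R b); first by exists b, R.
exact: (realizes_transfer_unique rkA_syl rkB_syl rkB_faith rk_XY Xa' Yb' Xa Yb).
Qed.

Lemma rational_transfer_realizes a : rational_closure X a ->
  exists R, realizes X R a /\ realizes Y R (rational_transfer a).
Proof.
case/(rational_closure_realizes rkA_syl rkB_reg rk_XY) => R [Xa [b _ Yb]].
by exists R; rewrite (rational_transferE Xa Yb).
Qed.

Lemma rational_transfer_closure a :
  rational_closure X a -> rational_closure Y (rational_transfer a).
Proof.
case/(rational_closure_realizes rkA_syl rkB_reg rk_XY) => R [Xa [b Yb_closure Yb]].
by rewrite (rational_transferE Xa Yb).
Qed.

Lemma rational_transfer_inj a1 a2 : rational_closure X a1 -> rational_closure X a2 ->
  rational_transfer a1 = rational_transfer a2 -> a1 = a2.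
Proof.
case/rational_transfer_realizes => R1 [Xa1 Yb1].
case/rational_transfer_realizes => R2 [Xa2 Yb2] b1b2.
rewrite b1b2 in Yb1.
exact: (realizes_transfer_unique rkB_syl rkA_syl rkA_faith rk_YX Yb1 Xa1 Yb2 Xa2).
Qed.

Lemma rational_transfer_surj b : rational_closure Y b ->
  exists2 a, rational_closure X a & rational_transfer a = b.
Proof.
case/(rational_closure_realizes rkB_syl rkA_reg rk_YX) => R [Yb [a Xa_closure Xa]].
by exists a; last exact: rational_transferE Xa Yb.
Qed.

Lemma rational_transferD a1 a2 : rational_closure X a1 -> rational_closure X a2 ->
  rational_transfer (a1 + a2) = rational_transfer a1 + rational_transfer a2.
Proof.
case/rational_transfer_realizes => R1 [Xa1 Yb1].
case/rational_transfer_realizes => R2 [Xa2 Yb2].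
exact: rational_transferE (realizes_add Xa1 Xa2) (realizes_add Yb1 Yb2).
Qed.

Lemma rational_transferM a1 a2 : rational_closure X a1 -> rational_closure X a2 ->
  rational_transfer (a1 * a2) = rational_transfer a1 * rational_transfer a2.
Proof.
case/rational_transfer_realizes => R1 [Xa1 Yb1].
case/rational_transfer_realizes => R2 [Xa2 Yb2].
exact: rational_transferE (realizes_mul Xa1 Xa2) (realizes_mul Yb1 Yb2).
Qed.

Lemma rational_transferZ c a : rational_closure X a ->
  rational_transfer (c *: a) = c *: rational_transfer a.
Proof.
case/rational_transfer_realizes => R [Xa Yb].
exact: rational_transferE (realizes_scale c Xa) (realizes_scale c Yb).
Qed.

Lemma rational_transfer1 : rational_transfer 1 = 1.
Proof.
have := rational_transferE (realizes_poly X (NCConst d 1)) (realizes_poly Y (NCConst d 1)).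
by rewrite /= !scale1r.
Qed.

Lemma rational_closure_isomorphic :
  subalg_isomorphic (rational_closure X) (rational_closure Y).
Proof.
exists rational_transfer; split.
- by split; [exact: rational_transfer_closure | exact: rational_transfer_inj].
- exact: rational_transfer_surj.
- by split; [exact: rational_transferD | exact: rational_transferM].
- exact: rational_transferZ.
- exact: rational_transfer1.
Qed.

Lemma well_defined_transfer r : well_defined Y r <-> well_defined X r.
Proof.
split=> [[b] | [a]].
- by case/(rat_eval_realizes rkB_syl rkA_syl rkA_reg rk_YX) => R [_ [a Xa _]]; exists a.
- by case/(rat_eval_realizes rkA_syl rkB_syl rkB_reg rk_XY) => R [_ [b Yb _]]; exists b.
Qed.

Lemma rat_eval_rk r a b : rat_eval X r a -> rat_eval Y r b ->
  rkB (b%:M : 'M_1) = rkA (a%:M : 'M_1).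
Proof.
case/(rat_eval_realizes rkA_syl rkB_syl rkB_reg rk_XY) => R [Xa [b' Yb' Yb]] Yb''.
by rewrite (rat_eval_fun Yb'' Yb') (realizes_rk rkA_syl rkB_syl rk_XY Xa Yb).
Qed.

End RationalClosureIsomorphism.

Unset Implicit Arguments. Set Strict Implicit.

Theorem corollary2p22 (A B : algType Cx)
    (rkA : forall m n : nat, 'M[A]_(m, n) -> Rdefinitions.R)
    (rkB : forall m n : nat, 'M[B]_(m, n) -> Rdefinitions.R)
    (rkA_syl : sylvester_rank rkA) (rkA_faith : rank_faithful rkA)
    (rkA_reg : rank_regular rkA)
    (rkB_syl : sylvester_rank rkB) (rkB_faith : rank_faithful rkB)
    (rkB_reg : rank_regular rkB)
    (d : nat) (X : 'I_d -> A) (Y : 'I_d -> B)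
    (hXY : forall m n (P : 'M[ncpoly d]_(m, n)),
        rkA m n (mxeval X P) = rkB m n (mxeval Y P)) :
  subalg_isomorphic (rational_closure X) (rational_closure Y) /\
  (forall r : ratexpr d,
      (well_defined Y r <-> well_defined X r) /\
      (forall (a : A) (b : B), rat_eval X r a -> rat_eval Y r b ->
          rkB 1%N 1%N (b%:M) = rkA 1%N 1%N (a%:M))).
Proof.
split; first exact: rational_closure_isomorphic hXY.
move=> r; split; first exact: well_defined_transfer hXY r.
exact: rat_eval_rk hXY r.
Qed.
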